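(* Let $H$ be a group, $U\subseteq H$ a subgroup, $E$ a field with an $H$-action, and $g_1,\dots,g_N$ elements of order $2$ in $N_H(U)/U$ which generate an infinite subgroup of $N_H(U)/U$. For each $j$ let $\langle U,g_j\rangle$ be the subgroup generated by $U$ and a lift of $g_j$. Then the natural map of $E$-semilinear representations $$r:E[H/U]\to\bigoplus_{j=1}^NE[H/\langle U,g_j\rangle],\qquad [hU]\mapsto\big([h\langle U,g_j\rangle]\big)_{j},$$ is injective.
   Context: $N_H(U)$ is the normalizer of $U$ in $H$. $E[S]$ for an $H$-set $S$ is the $E$-vector space with basis $S$ and $H$-action $h(e[s])=h(e)[hs]$. *)

(* H is an arbitrary (possibly infinite) group: MathComp's
   [groupType] from boot/monoid.v (not a finGroupType). *)
From HB Require Import structures.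
From mathcomp Require Import all_boot all_order all_algebra all_fingroup.
From Stdlib Require Import ClassicalEpsilon.

Set Implicit Arguments.
Unset Strict Implicit.
Unset Printing Implicit Defensive.

Import GRing.Theory.

Local Open Scope group_scope.

Definition asbool (P : Prop) : bool :=
  if excluded_middle_informative P then true else false.

Section GroupDefs.
Variable H : groupType.

Definition is_subgroup (V : H -> Prop) : Prop :=
  V 1 /\ (forall x y, V x -> V y -> V (x * y^-1)).

Definition gen (S : H -> Prop) : H -> Prop :=
  fun x => forall V, is_subgroup V -> (forall s, S s -> V s) -> V x.

Definition in_normalizer (U : {pred H}) (x : H) : Prop :=
  forall u, (x * u * x^-1 \in U) = (u \in U).

(* the class gU of g in N_H(U)/U has order exactly 2 *)
Definition order2_mod (U : {pred H}) (g : H) : Prop :=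
  g \notin U /\ g * g \in U.

(* the subset K of H meets infinitely many left cosets of U, i.e. (for a
   subgroup K of N_H(U) containing U) the subgroup K/U of N_H(U)/U is
   infinite *)
Definition infinitely_many_cosets (U : {pred H}) (K : H -> Prop) : Prop :=
  ~ (exists s : seq H, forall x, K x -> exists2 y, y \in s & y^-1 * x \in U).

Definition genUg (U : {pred H}) (g : H) : H -> Prop :=
  gen (fun x => x \in U \/ x = g).

(* Free E-vector space E[H/V] on the left cosets of a subgroup V.
   An element of E[H/V] is a finitely supported function H/V -> E; we view
   it as a function H -> E constant on left cosets hV.  The formal
   combination sum_i c_i [x_i V], given as a list l = [:: (c_i, x_i)],
   is the function  hV |-> sum of the c_i with x_i V = hV.  Every element of
   E[H/V] is of this form. *)
Definition fvs_class (E : fieldType) (V : H -> Prop) (l : seq (E * H)) : H -> E :=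
  fun h => (\sum_(p <- l | asbool (V ((h^-1 * p.2)%g))) p.1)%R.

End GroupDefs.

From HB Require Import structures.
From mathcomp Require Import all_boot all_order all_algebra all_fingroup.
From Stdlib Require Import ClassicalEpsilon.

Import GRing.Theory.
Local Open Scope group_scope.

(* An element of E[H/U] is a
   finitely supported function F : H -> E, constant on left cosets hU.  Since
   g_j normalizes U and has order 2 modulo U, the subgroup <U, g_j> is the
   union U \cup g_j U, so the j-th component of r(F) is h |-> F h + F (h g_j).
   If r(F1) = r(F2), the difference f = F1 - F2 therefore satisfies
   f (h g_j) = - f h and f (h u) = f h for u in U.  The elements k with
   f (h k) = +-f h for all h form a subgroup, so this holds for every k in the
   group K generated by U and the g_j.  If f h were nonzero, f would be
   nonzero on all of hK, which meets infinitely many cosets of U, whereas f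
   is supported on the finitely many cosets named in the formal combinations. *)

Lemma asboolP (P : Prop) : reflect P (asbool P).
Proof. by rewrite /asbool; case: excluded_middle_informative; constructor. Qed.

Lemma sum_predU (R : nmodType) (T : Type) (l : seq T) (a b : pred T)
    (G : T -> R) :
  (forall p, ~~ (a p && b p)) ->
  (\sum_(p <- l | a p || b p) G p
   = \sum_(p <- l | a p) G p + \sum_(p <- l | b p) G p)%R.
Proof.
move=> hab; elim: l => [|p l IH]; first by rewrite !big_nil addr0.
rewrite !big_cons IH; have := hab p.
case: (a p); case: (b p) => //= _; [exact: addrA | exact: addrCA].
Qed.

Lemma gen_mul (H : groupType) (S : H -> Prop) x y :
  gen S x -> gen S y -> gen S (x * y).
Proof.
move=> gx gy V [V1 VB] hS.
have Vy := gy V (conj V1 VB) hS.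
have Vyi : V y^-1 by have := VB _ _ V1 Vy; rewrite mul1g.
by have := VB _ _ (gx V (conj V1 VB) hS) Vyi; rewrite invgK.
Qed.

Definition signed_period (H : groupType) (V : zmodType) (f : H -> V) (k : H) :=
  forall h, f (h * k) = f h \/ f (h * k) = (- f h)%R.
Arguments signed_period {H V} f k.

Lemma signed_period_subgroup (H : groupType) (V : zmodType) (f : H -> V) :
  is_subgroup (signed_period f).
Proof.
split; first by move=> h; left; rewrite mulg1.
move=> x y Px Py h.
have [A|A] := Py (h * (x * y^-1)); rewrite -mulgA mulgVK in A;
  have [B|B] := Px h.
- by left; rewrite -A B.
- by right; rewrite -A B.
- by right; rewrite -B A opprK.
- by left; rewrite -(opprK (f (h * (x * y^-1)))) -A B opprK.
Qed.

Lemma gen_signed_period (H : groupType) (V : zmodType) (f : H -> V)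
    (S : H -> Prop) :
  (forall s, S s -> signed_period f s) ->
  forall k, gen S k -> signed_period f k.
Proof. by move=> hS k gk; apply: gk; [exact: signed_period_subgroup | ]. Qed.

Section SubgroupU.
Variable H : groupType.
Variable U : {pred H}.
Hypothesis hU : group_closed U.

Let U1 : (1 : H) \in U. Proof. exact: hU.1. Qed.
Let UM {x y} : x \in U -> y \in U -> x * y \in U.
Proof. exact: group_closedM hU x y. Qed.
Let UV {x} : x \in U -> x^-1 \in U.
Proof. exact: group_closedV hU x. Qed.

Section Involution.
Variable g : H.
Hypothesis hgN : in_normalizer U g.
Hypothesis hg2 : order2_mod U g.

Lemma normalizer_conjV v : (g^-1 * v * g \in U) = (v \in U).
Proof. by rewrite -hgN !mulgA mulgV mul1g mulgK. Qed.

Lemma coset_union_subgroup : is_subgroup (fun y => y \in U \/ g^-1 * y \in U).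
Proof.
have [_ g2] := hg2; split; first by left.
move=> x y [xU|xU] [yU|yU].
- by left; apply: UM => //; apply: UV.
- right.
  have -> : g^-1 * (x * y^-1) = (g^-1 * (x * (g^-1 * y)^-1) * g) * (g * g)^-1.
    by rewrite !invMg !invgK !mulgA !mulgK.
  apply: UM; last exact: UV.
  by rewrite normalizer_conjV; apply: UM => //; apply: UV.
- by right; rewrite mulgA; apply: UM => //; apply: UV.
- left.
  have -> : x * y^-1 = g * ((g^-1 * x) * (g^-1 * y)^-1) * g^-1.
    by rewrite !invMg !invgK !mulgA mulgV mul1g mulgK.
  by rewrite hgN; apply: UM => //; apply: UV.
Qed.

Lemma genUgP y : genUg U g y <-> (y \in U \/ g^-1 * y \in U).
Proof.
split.
- move=> gy; apply: (gy (fun y => y \in U \/ g^-1 * y \in U)).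
    exact: coset_union_subgroup.
  by move=> s [sU| ->]; [left | right; rewrite mulVg].
- move=> [yU|yU]; first by move=> V _ hS; apply: hS; left.
  have -> : y = g * (g^-1 * y) by rewrite mulKVg.
  apply: gen_mul.
  + by move=> V _ hS; apply: hS; right.
  + by move=> V _ hS; apply: hS; left.
Qed.

End Involution.

Variable E : fieldType.

Definition coset_value (l : seq (E * H)) (h : H) : E :=
  (\sum_(p <- l | (h^-1 * p.2)%g \in U) p.1)%R.

Lemma fvs_classU l h : fvs_class (fun x => x \in U) l h = coset_value l h.
Proof. by apply: eq_bigl => p; apply/asboolP/idP. Qed.

(* The component of r in E[H/<U,g>] is h |-> F h + F (h g), since the coset
   h<U,g> is the disjoint union hU \cup hgU. *)
Lemma fvs_class_genUg g l h : in_normalizer U g -> order2_mod U g ->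
  fvs_class (genUg U g) l h = (coset_value l h + coset_value l (h * g))%R.
Proof.
move=> hg ho; rewrite /fvs_class /coset_value -sum_predU.
- by apply: eq_bigl => p; apply/asboolP/orP; rewrite genUgP // invMg -mulgA.
- move=> p; apply/negP => /andP[h1 h2]; have [gnU _] := ho.
  rewrite invMg -mulgA in h2.
  have := UM h1 (UV h2); rewrite invMg invgK mulgA mulgV mul1g.
  by rewrite (negbTE gnU).
Qed.

Lemma coset_value_diff_antiperiodic g l1 l2 h :
  in_normalizer U g -> order2_mod U g ->
  fvs_class (genUg U g) l1 =1 fvs_class (genUg U g) l2 ->
  (coset_value l1 (h * g) - coset_value l2 (h * g)
   = - (coset_value l1 h - coset_value l2 h))%R.
Proof.
move=> hg ho e; have := e h; rewrite !fvs_class_genUg // => eh.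
apply/eqP; rewrite opprB subr_eq addrAC eq_sym subr_eq.
by rewrite (addrC (coset_value l1 (h * g))) eh.
Qed.

Lemma coset_value_rU l h u : u \in U -> coset_value l (h * u) = coset_value l h.
Proof.
move=> uU; apply: eq_bigl => p; rewrite invMg -mulgA.
apply/idP/idP => hp; last exact: UM (UV uU) hp.
by have := UM uU hp; rewrite mulKVg.
Qed.

Lemma coset_value_support {l h} :
  coset_value l h != 0%R -> exists2 p, p \in l & h^-1 * p.2 \in U.
Proof.
move=> nz; apply/hasP; apply: contraNT nz => /hasPn hn.
apply/eqP; rewrite /coset_value big_seq_cond big1 // => p /andP[pin cp].
by rewrite (negbTE (hn p pin)) in cp.
Qed.

Lemma coset_value_diff_support l1 l2 h :
  (coset_value l1 h - coset_value l2 h != 0)%R ->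
  exists2 p, p \in l1 ++ l2 & h^-1 * p.2 \in U.
Proof.
move=> nz.
have [e1|n1] := eqVneq (coset_value l1 h) 0%R; last first.
  by have [p pin pU] := coset_value_support n1; exists p; rewrite ?mem_cat ?pin.
have [e2|n2] := eqVneq (coset_value l2 h) 0%R; last first.
  by have [p pin pU] := coset_value_support n2; exists p; rewrite ?mem_cat ?pin ?orbT.
by move: nz; rewrite e1 e2 subrr eqxx.
Qed.

End SubgroupU.

Arguments coset_value {H} U {E}.
Arguments coset_value_diff_support {H U E l1 l2 h}.

Theorem mainTheorem19 (H : groupType) (U : {pred H}) (E : fieldType)
  (act : H -> {rmorphism E -> E})
  (act1 : forall e, act 1 e = e)
  (actM : forall x y e, act (x * y) e = act x (act y e))
  (N : nat) (g : 'I_N -> H)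
  (hU : group_closed U)
  (hgN : forall j, in_normalizer U (g j))
  (hg2 : forall j, order2_mod U (g j))
  (hinf : infinitely_many_cosets U (gen (fun x => x \in U \/ exists j, x = g j))) :
  forall l1 l2 : seq (E * H),
    (forall j, fvs_class (genUg U (g j)) l1 =1 fvs_class (genUg U (g j)) l2) ->
    fvs_class (fun x => x \in U) l1 =1 fvs_class (fun x => x \in U) l2.
Proof.
move=> l1 l2 hyp h; rewrite !fvs_classU //; apply/eqP; rewrite -subr_eq0.
pose f x := (coset_value U l1 x - coset_value U l2 x)%R.
have periodic k : gen (fun x => x \in U \/ exists j, x = g j) k ->
    signed_period f k.
  apply: gen_signed_period => s [sU | [j ->]] x.
    by left; rewrite /f !coset_value_rU.
  by right; apply: coset_value_diff_antiperiodic.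
apply: contraT => nz; exfalso; apply: hinf.
exists (map (fun p => h^-1 * p.2) (l1 ++ l2)) => x Kx.
have nzx : f (h * x) != 0%R by have [->|->] := periodic x Kx h; rewrite ?oppr_eq0.
have [p pin pU] := coset_value_diff_support (h := h * x) nzx.
exists (h^-1 * p.2); first exact: map_f.
by have := group_closedV hU pU; rewrite !invMg !invgK !mulgA.
Qed.
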